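(* Let $A$ be a braided group in $\mathcal C$, and for a right crossed module $(Z,\mu_r,\Delta_r)$ over $A$ put $\sigma_{Z/A}:=\mu_r\circ(Z\otimes S)\circ\Delta_r$. Then for all right crossed modules $X,Y$ over $A$, $\Psi^{\mathcal{YD}}_{Y,X}\circ\sigma_{(Y\otimes X)/A}\circ\Psi^{\mathcal{YD}}_{X,Y}=\Psi_{Y,X}\circ(\sigma_{Y/A}\otimes\sigma_{X/A})\circ\Psi_{X,Y}$, where $Y\otimes X$ is the tensor product crossed module and $\Psi^{\mathcal{YD}}$ is the braiding of $\mathcal{YD}(\mathcal C)^A_A$.
   Context: $\mathcal C$ is a braided monoidal category, assumed strict, with tensor product $\otimes$, unit $\underline 1$ and braiding $\Psi_{X,Y}:X\otimes Y\to Y\otimes X$. Inside tensor products of morphisms an object name $X$ stands for ${\rm id}_X$. A braided group is a bialgebra $(A,\mu,\eta,\Delta,\epsilon)$ in $\mathcal C$ (with $\Delta\circ\mu=(\mu\otimes\mu)\circ(A\otimes\Psi_{A,A}\otimes A)\circ(\Delta\otimes\Delta)$ and the unit/counit compatibilities) with antipode $S$: $\mu\circ(S\otimes A)\circ\Delta=\eta\circ\epsilon=\mu\circ(A\otimes S)\circ\Delta$. A right crossed module over $A$ is a right $A$-module $\mu_r:X\otimes A\to X$ and right $A$-comodule $\Delta_r:X\to X\otimes A$ such that $(X\otimes\mu)\circ(\Psi_{A,X}\otimes A)\circ(A\otimes(\Delta_r\circ\mu_r))\circ(\Psi_{X,A}\otimes A)\circ(X\otimes\Delta)=(\mu_r\otimes\mu)\circ(X\otimes\Psi_{A,A}\otimes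 A)\circ(\Delta_r\otimes\Delta)$. The tensor product crossed module $X\otimes Y$ has action $(\mu^X_r\otimes\mu^Y_r)\circ(X\otimes\Psi_{Y,A}\otimes A)\circ(X\otimes Y\otimes\Delta)$ and coaction $(X\otimes Y\otimes\mu)\circ(X\otimes\Psi_{A,Y}\otimes A)\circ(\Delta^X_r\otimes\Delta^Y_r)$. The braiding of $\mathcal{YD}(\mathcal C)^A_A$ is $\Psi^{\mathcal{YD}}_{X,Y}:=(Y\otimes\mu^X_r)\circ(\Psi_{X,Y}\otimes A)\circ(X\otimes\Delta^Y_r)$. *)

Set Implicit Arguments.
Unset Strict Implicit.

Record Category := {
  Ob :> Type;
  Hom : Ob -> Ob -> Type;
  comp : forall X Y Z : Ob, Hom Y Z -> Hom X Y -> Hom X Z;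
  idm : forall X : Ob, Hom X X;
  comp_assoc : forall (X Y Z W : Ob) (h : Hom Z W) (g : Hom Y Z) (f : Hom X Y),
      comp h (comp g f) = comp (comp h g) f;
  comp_idl : forall (X Y : Ob) (f : Hom X Y), comp (idm Y) f = f;
  comp_idr : forall (X Y : Ob) (f : Hom X Y), comp f (idm X) = f }.

Arguments Hom {c} X Y.
Arguments comp {c X Y Z} g f.
Arguments idm {c} X.

Notation "g ∘ f" := (comp g f) (at level 40, left associativity).

(* In a
   strict monoidal category the associativity / unit constraints are
   equalities of objects, and these casts are the (identity) constraints. *)
Definition castH {C : Category} {X Y : C} (e : X = Y) : Hom X Y :=
  match e in (_ = Y') return Hom X Y' with eq_refl => idm X end.

Record Braided (C : Category) := {
  tens : C -> C -> C;
  one : C;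
  tensm : forall X Y X' Y' : C, Hom X X' -> Hom Y Y' -> Hom (tens X Y) (tens X' Y');
  tensm_comp : forall (X Y Z X' Y' Z' : C) (f : Hom X Y) (g : Hom Y Z)
      (f' : Hom X' Y') (g' : Hom Y' Z'),
      tensm (g ∘ f) (g' ∘ f') = tensm g g' ∘ tensm f f';
  tensm_id : forall X Y : C, tensm (idm X) (idm Y) = idm (tens X Y);
  tensA : forall X Y Z : C, tens (tens X Y) Z = tens X (tens Y Z);
  tens1l : forall X : C, tens one X = X;
  tens1r : forall X : C, tens X one = X;
  tensmA : forall (X Y Z X' Y' Z' : C) (f : Hom X X') (g : Hom Y Y') (h : Hom Z Z'),
      castH (tensA X' Y' Z') ∘ tensm (tensm f g) h
      = tensm f (tensm g h) ∘ castH (tensA X Y Z);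
  tensm1l : forall (X Y : C) (f : Hom X Y),
      castH (tens1l Y) ∘ tensm (idm one) f = f ∘ castH (tens1l X);
  tensm1r : forall (X Y : C) (f : Hom X Y),
      castH (tens1r Y) ∘ tensm f (idm one) = f ∘ castH (tens1r X);
  braid : forall X Y : C, Hom (tens X Y) (tens Y X);
  braid_iso : forall X Y : C, exists g : Hom (tens Y X) (tens X Y),
      g ∘ braid X Y = idm (tens X Y) /\ braid X Y ∘ g = idm (tens Y X);
  braid_nat : forall (X Y X' Y' : C) (f : Hom X X') (g : Hom Y Y'),
      braid X' Y' ∘ tensm f g = tensm g f ∘ braid X Y;
  braid_hex1 : forall X Y Z : C,
      braid (tens X Y) Z =
      castH (tensA Z X Y) ∘ tensm (braid X Z) (idm Y)
      ∘ castH (eq_sym (tensA X Z Y)) ∘ tensm (idm X) (braid Y Z)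
      ∘ castH (tensA X Y Z);
  braid_hex2 : forall X Y Z : C,
      braid X (tens Y Z) =
      castH (eq_sym (tensA Y Z X)) ∘ tensm (idm Y) (braid X Z)
      ∘ castH (tensA Y X Z) ∘ tensm (braid X Y) (idm Z)
      ∘ castH (eq_sym (tensA X Y Z)) }.

Arguments tens {C} b X Y.
Arguments one {C} b.
Arguments tensm {C} b {X Y X' Y'} f g.
Arguments tensA {C} b X Y Z.
Arguments tens1l {C} b X.
Arguments tens1r {C} b X.
Arguments braid {C} b X Y.

Section Alg.
Context {C : Category} (B : Braided C).

Local Notation "X ⊗ Y" := (tens B X Y) (at level 34, left associativity).
Local Notation "f ⊠ g" := (tensm B f g) (at level 34, left associativity).

Definition assocm (X Y Z : C) : Hom ((X ⊗ Y) ⊗ Z) (X ⊗ (Y ⊗ Z)) :=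
  castH (tensA B X Y Z).
Definition assocmI (X Y Z : C) : Hom (X ⊗ (Y ⊗ Z)) ((X ⊗ Y) ⊗ Z) :=
  castH (eq_sym (tensA B X Y Z)).
Definition lu (X : C) : Hom (one B ⊗ X) X := castH (tens1l B X).
Definition luI (X : C) : Hom X (one B ⊗ X) := castH (eq_sym (tens1l B X)).
Definition ru (X : C) : Hom (X ⊗ one B) X := castH (tens1r B X).
Definition ruI (X : C) : Hom X (X ⊗ one B) := castH (eq_sym (tens1r B X)).

(* X (x) Psi_{Y,Z} (x) W : X Y Z W -> X Z Y W, as a map (XY)(ZW) -> (XZ)(YW) *)
Definition mid (X Y Z W : C) : Hom ((X ⊗ Y) ⊗ (Z ⊗ W)) ((X ⊗ Z) ⊗ (Y ⊗ W)) :=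
  assocmI X Z (Y ⊗ W) ∘ (idm X ⊠ assocm Z Y W)
  ∘ (idm X ⊠ (braid B Y Z ⊠ idm W)) ∘ (idm X ⊠ assocmI Y Z W)
  ∘ assocm X Y (Z ⊗ W).

Record BraidedGroup := {
  bgA : C;
  bg_mu : Hom (bgA ⊗ bgA) bgA;
  bg_eta : Hom (one B) bgA;
  bg_Delta : Hom bgA (bgA ⊗ bgA);
  bg_eps : Hom bgA (one B);
  bg_S : Hom bgA bgA;
  bg_mu_assoc : bg_mu ∘ (bg_mu ⊠ idm bgA)
                = bg_mu ∘ (idm bgA ⊠ bg_mu) ∘ assocm bgA bgA bgA;
  bg_mu_unitl : bg_mu ∘ (bg_eta ⊠ idm bgA) = lu bgA;
  bg_mu_unitr : bg_mu ∘ (idm bgA ⊠ bg_eta) = ru bgA;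
  bg_coassoc : assocm bgA bgA bgA ∘ (bg_Delta ⊠ idm bgA) ∘ bg_Delta
               = (idm bgA ⊠ bg_Delta) ∘ bg_Delta;
  bg_counitl : lu bgA ∘ (bg_eps ⊠ idm bgA) ∘ bg_Delta = idm bgA;
  bg_counitr : ru bgA ∘ (idm bgA ⊠ bg_eps) ∘ bg_Delta = idm bgA;
  bg_bialg : bg_Delta ∘ bg_mu
             = (bg_mu ⊠ bg_mu) ∘ mid bgA bgA bgA bgA ∘ (bg_Delta ⊠ bg_Delta);
  bg_Delta_eta : bg_Delta ∘ bg_eta = (bg_eta ⊠ bg_eta) ∘ luI (one B);
  bg_eps_mu : bg_eps ∘ bg_mu = lu (one B) ∘ (bg_eps ⊠ bg_eps);
  bg_eps_eta : bg_eps ∘ bg_eta = idm (one B);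
  bg_antipode_l : bg_mu ∘ (bg_S ⊠ idm bgA) ∘ bg_Delta = bg_eta ∘ bg_eps;
  bg_antipode_r : bg_mu ∘ (idm bgA ⊠ bg_S) ∘ bg_Delta = bg_eta ∘ bg_eps }.

Section CrossedModules.
Variable H : BraidedGroup.
Local Notation A := (bgA H).
Local Notation mu := (bg_mu H).
Local Notation eta := (bg_eta H).
Local Notation Delta := (bg_Delta H).
Local Notation eps := (bg_eps H).
Local Notation S := (bg_S H).

Record RCrossedModule := {
  cmX : C;
  cm_act : Hom (cmX ⊗ A) cmX;
  cm_coact : Hom cmX (cmX ⊗ A);
  cm_act_assoc : cm_act ∘ (cm_act ⊠ idm A)
                 = cm_act ∘ (idm cmX ⊠ mu) ∘ assocm cmX A A;
  cm_act_unit : cm_act ∘ (idm cmX ⊠ eta) = ru cmX;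
  cm_coact_coassoc : (cm_coact ⊠ idm A) ∘ cm_coact
                     = assocmI cmX A A ∘ (idm cmX ⊠ Delta) ∘ cm_coact;
  cm_coact_counit : (idm cmX ⊠ eps) ∘ cm_coact = ruI cmX;
  cm_YD :
    (idm cmX ⊠ mu) ∘ assocm cmX A A ∘ (braid B A cmX ⊠ idm A)
    ∘ assocmI A cmX A ∘ (idm A ⊠ (cm_coact ∘ cm_act)) ∘ assocm A cmX A
    ∘ (braid B cmX A ⊠ idm A) ∘ assocmI cmX A A ∘ (idm cmX ⊠ Delta)
    = (cm_act ⊠ mu) ∘ mid cmX A A A ∘ (cm_coact ⊠ Delta) }.

Definition sigma {Z : C} (act : Hom (Z ⊗ A) Z) (coact : Hom Z (Z ⊗ A)) : Hom Z Z :=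
  act ∘ (idm Z ⊠ S) ∘ coact.

Definition tens_act (X Y : RCrossedModule) :
    Hom ((cmX X ⊗ cmX Y) ⊗ A) (cmX X ⊗ cmX Y) :=
  (cm_act X ⊠ cm_act Y) ∘ mid (cmX X) (cmX Y) A A
  ∘ (idm (cmX X ⊗ cmX Y) ⊠ Delta).

Definition tens_coact (X Y : RCrossedModule) :
    Hom (cmX X ⊗ cmX Y) ((cmX X ⊗ cmX Y) ⊗ A) :=
  (idm (cmX X ⊗ cmX Y) ⊠ mu) ∘ mid (cmX X) A (cmX Y) A
  ∘ (cm_coact X ⊠ cm_coact Y).

Definition ydbraid (X Y : RCrossedModule) : Hom (cmX X ⊗ cmX Y) (cmX Y ⊗ cmX X) :=
  (idm (cmX Y) ⊠ cm_act X) ∘ assocm (cmX Y) (cmX X) A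
  ∘ (braid B (cmX X) (cmX Y) ⊠ idm A) ∘ assocmI (cmX X) (cmX Y) A
  ∘ (idm (cmX X) ⊠ cm_coact Y).

End CrossedModules.
End Alg.

Arguments sigma {C B H Z} act coact.
Arguments tens_act {C B H} X Y.
Arguments tens_coact {C B H} X Y.
Arguments ydbraid {C B H} X Y.

From Stdlib Require Import List ProofIrrelevance.
Import ListNotations.

(* Coherence lets us compute in the strictification of the braided category: objects are
   lists, and the associativity and unit constraints become equalities of lists.  By uniqueness of
   convolution inverses the antipode is a braided anti-algebra and anti-coalgebra map,
   S ∘ μ = μ ∘ Ψ ∘ (S ⊗ S) and Δ ∘ S = (S ⊗ S) ∘ Ψ ∘ Δ.  Hence σ of Y ⊗ X acts by
   S(y₁ x₁) = S(x₁) S(y₁): first by the antipode of the X-coaction, then by that of the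
   Y-coaction.  Conjugating by the crossed-module braidings, the crossed-module condition
   of X turns the X-factor into σ_X ⊗ 1, the remaining action on Y by the antipode of its own
   coaction is σ_Y, and naturality and the hexagons assemble the braidings into
   Ψ ∘ (σ_Y ⊗ σ_X) ∘ Ψ. *)

Set Implicit Arguments.
Unset Strict Implicit.

Section Casts.
Context {C : Category} (B : Braided C).
Local Notation "X ⊗ Y" := (tens B X Y) (at level 34, left associativity).
Local Notation "f ⊠ g" := (tensm B f g) (at level 34, left associativity).

Lemma castH_irrel {X Y : C} (e e' : X = Y) : castH e = castH e'.
Proof. now rewrite (proof_irrelevance _ e e'). Qed.

Lemma castH_id {X : C} (e : X = X) : castH e = idm X.
Proof. now rewrite (proof_irrelevance _ e eq_refl). Qed.

Lemma castH_comp {X Y Z : C} (e1 : X = Y) (e2 : Y = Z) :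
  castH e2 ∘ castH e1 = castH (eq_trans e1 e2).
Proof. destruct e2; apply comp_idl. Qed.

Lemma castH_compA {W X Y Z : C} (f : Hom W X) (e1 : X = Y) (e2 : Y = Z) :
  castH e2 ∘ (castH e1 ∘ f) = castH (eq_trans e1 e2) ∘ f.
Proof. now rewrite comp_assoc, castH_comp. Qed.

Lemma castH_move_l {X Y Z : C} (e : Y = Z) (f : Hom X Y) (g : Hom X Z) :
  castH e ∘ f = g -> f = castH (eq_sym e) ∘ g.
Proof. intros <-. now rewrite comp_assoc, castH_comp, castH_id, comp_idl. Qed.

Lemma castH_move_r {X Y Z : C} (e : X = Y) (f : Hom Y Z) (g : Hom X Z) :
  f ∘ castH e = g -> f = g ∘ castH (eq_sym e).
Proof. intros <-. now rewrite <- comp_assoc, castH_comp, castH_id, comp_idr. Qed.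

Lemma tensm_castl {X X' Y : C} (e : X = X') :
  castH e ⊠ idm Y = castH (f_equal2 (tens B) e eq_refl).
Proof. destruct e; rewrite !castH_id; apply tensm_id. Qed.

Lemma tensm_castr {X Y Y' : C} (e : Y = Y') :
  idm X ⊠ castH e = castH (f_equal2 (tens B) eq_refl e).
Proof. destruct e; rewrite !castH_id; apply tensm_id. Qed.

Lemma tensm_compl {X Y Z V V' : C} (f : Hom Y Z) (g : Hom X Y) (h : Hom V V') :
  (f ∘ g) ⊠ h = (f ⊠ idm V') ∘ (g ⊠ h).
Proof. now rewrite <- tensm_comp, comp_idl. Qed.

Lemma tensm_compr {X Y Z V V' : C} (f : Hom Y Z) (g : Hom X Y) (h : Hom V V') :
  h ⊠ (f ∘ g) = (idm V' ⊠ f) ∘ (h ⊠ g).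
Proof. now rewrite <- tensm_comp, comp_idl. Qed.

Lemma tensm_comp3l {X Y Z W V V' : C} (f : Hom Z W) (g : Hom Y Z) (h : Hom X Y)
    (k : Hom V V') :
  (f ∘ g ∘ h) ⊠ k = (f ⊠ idm V') ∘ (g ⊠ k) ∘ (h ⊠ idm V).
Proof. now rewrite <- !tensm_comp, !comp_idl, comp_idr. Qed.

Lemma tensm_comp3r {X Y Z W V V' : C} (f : Hom Z W) (g : Hom Y Z) (h : Hom X Y)
    (k : Hom V V') :
  k ⊠ (f ∘ g ∘ h) = (idm V' ⊠ f) ∘ (k ⊠ g) ∘ (idm V ⊠ h).
Proof. now rewrite <- !tensm_comp, !comp_idl, comp_idr. Qed.

Lemma tensmA_castH {X Y Z X' Y' Z' W : C} (f : Hom X X') (g : Hom Y Y') (h : Hom Z Z')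
    (e : (X' ⊗ Y') ⊗ Z' = W) :
  castH e ∘ ((f ⊠ g) ⊠ h)
  = castH (eq_trans (eq_sym (tensA B X' Y' Z')) e) ∘ (f ⊠ (g ⊠ h)) ∘ castH (tensA B X Y Z).
Proof.
  rewrite <- (comp_assoc _ (f ⊠ (g ⊠ h))), <- tensmA, comp_assoc, castH_comp.
  f_equal; apply castH_irrel.
Qed.

Lemma tensm1l_castH {X Y : C} (f : Hom X Y) :
  idm (one B) ⊠ f = castH (eq_sym (tens1l B Y)) ∘ f ∘ castH (tens1l B X).
Proof. rewrite <- comp_assoc; apply castH_move_l; apply tensm1l. Qed.

Lemma tensm1r_castH {X Y : C} (f : Hom X Y) :
  f ⊠ idm (one B) = castH (eq_sym (tens1r B Y)) ∘ f ∘ castH (tens1r B X).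
Proof. rewrite <- comp_assoc; apply castH_move_l; apply tensm1r. Qed.

Lemma braid_castH {X X' Y Y' : C} (e1 : X = X') (e2 : Y = Y') :
  braid B X' Y' = castH (f_equal2 (tens B) e2 e1) ∘ braid B X Y
                  ∘ castH (f_equal2 (tens B) (eq_sym e1) (eq_sym e2)).
Proof. destruct e1, e2; now rewrite !castH_id, comp_idl, comp_idr. Qed.

End Casts.

Ltac rassoc := repeat rewrite <- comp_assoc.
Ltac ccast := rassoc; repeat (rewrite tensm_id || rewrite tensm_castl || rewrite tensm_castr
  || rewrite comp_idl || rewrite comp_idr || rewrite castH_compA || rewrite castH_comp
  || rewrite castH_id).
Ltac castH_congr := repeat (apply castH_irrel || f_equal).
Ltac tensm_split := repeat (rewrite tensm_compl || rewrite tensm_compr).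

Section BraidUnit.
Context {C : Category} (B : Braided C).

Lemma invertible_idempotent_castH {X Y : C} (b : Hom X Y) (e : Y = X) :
  (exists g : Hom Y X, g ∘ b = idm X /\ b ∘ g = idm Y) ->
  b = b ∘ (castH e ∘ b) -> b = castH (eq_sym e).
Proof.
  intros [g [Hgb Hbg]] Hidem.
  assert (Hcb : castH e ∘ b = idm X).
  { now rewrite <- (comp_idl (castH e ∘ b)), <- Hgb, <- comp_assoc, <- Hidem. }
  rewrite <- (comp_idl b), <- (castH_id (eq_trans e (eq_sym e))), <- castH_comp,
    <- comp_assoc, Hcb, comp_idr.
  reflexivity.
Qed.

(* Ψ_{1,Z} is invertible and, by the hexagon with two unit factors, idempotent up to the
   unit constraints; so it is a constraint itself.  Likewise for Ψ_{Z,1}. *)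
Lemma braid_unit_l (Z : C) : exists e, braid B (one B) Z = castH e.
Proof.
  pose proof (braid_hex1 B (one B) (one B) Z) as Hhex.
  rewrite (braid_castH B (eq_sym (tens1l B (one B))) (eq_refl Z)) in Hhex.
  rewrite tensm1r_castH, tensm1l_castH in Hhex.
  rassoc. revert Hhex. ccast. intro Hhex.
  apply castH_move_l in Hhex. revert Hhex. ccast. intro Hhex.
  apply castH_move_r in Hhex. revert Hhex. ccast. intro Hhex.
  eexists. apply invertible_idempotent_castH; [apply braid_iso | exact Hhex].
Qed.

Lemma braid_unit_r (Z : C) : exists e, braid B Z (one B) = castH e.
Proof.
  pose proof (braid_hex2 B Z (one B) (one B)) as Hhex.
  rewrite (braid_castH B (eq_refl Z) (eq_sym (tens1l B (one B)))) in Hhex.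
  rewrite tensm1r_castH, tensm1l_castH in Hhex.
  rassoc. revert Hhex. ccast. intro Hhex.
  apply castH_move_l in Hhex. revert Hhex. ccast. intro Hhex.
  apply castH_move_r in Hhex. revert Hhex. ccast. intro Hhex.
  eexists. apply invertible_idempotent_castH; [apply braid_iso | exact Hhex].
Qed.
End BraidUnit.

Section ListStrictification.
Context {C : Category} (B : Braided C).
Local Notation "X ⊗ Y" := (tens B X Y) (at level 34, left associativity).
Local Notation "f ⊠ g" := (tensm B f g) (at level 34, left associativity).

(* [x] is sent to x itself, not to x ⊗ 1, so that morphisms between short lists are
   literally the morphisms of C. *)
Fixpoint tens_list (l : list C) : C :=
  match l with
  | [] => one B
  | x :: l' => match l' with [] => x | _ :: _ => x ⊗ tens_list l' end
  end.

Lemma tens_list_app (l1 l2 : list C) : tens_list (l1 ++ l2) = tens_list l1 ⊗ tens_list l2.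
Proof.
  induction l1 as [|x [|y l1] IH]; simpl.
  - symmetry; apply tens1l.
  - destruct l2; [symmetry; apply tens1r | reflexivity].
  - change (x ⊗ tens_list ((y :: l1) ++ l2) = (x ⊗ tens_list (y :: l1)) ⊗ tens_list l2).
    rewrite IH; symmetry; apply tensA.
Qed.

Definition HomL (l1 l2 : list C) := Hom (tens_list l1) (tens_list l2).
Definition idL (l : list C) : HomL l l := idm (tens_list l).

Definition tensL {l1 l1' l2 l2'} (f : HomL l1 l1') (g : HomL l2 l2') :
    HomL (l1 ++ l2) (l1' ++ l2') :=
  castH (eq_sym (tens_list_app l1' l2')) ∘ (f ⊠ g) ∘ castH (tens_list_app l1 l2).

Definition braidL (l1 l2 : list C) : HomL (l1 ++ l2) (l2 ++ l1) :=
  castH (eq_sym (tens_list_app l2 l1)) ∘ braid B (tens_list l1) (tens_list l2)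
  ∘ castH (tens_list_app l1 l2).

Definition transport {l1 l1' l2 l2'} (e1 : l1 = l1') (e2 : l2 = l2') (f : HomL l1 l2) :
    HomL l1' l2' :=
  match e1 in _ = a return HomL a l2' with
  | eq_refl => match e2 in _ = b return HomL l1 b with eq_refl => f end
  end.

(* Transparent versions of [app_assoc] and [app_nil_r]: on concrete lists they reduce to
   [eq_refl], so the transports they induce vanish by computation. *)
Fixpoint app_assocT (l m n : list C) : l ++ (m ++ n) = (l ++ m) ++ n :=
  match l with [] => eq_refl | x :: l' => f_equal (cons x) (app_assocT l' m n) end.
Fixpoint app_nil_rT (l : list C) : l ++ [] = l :=
  match l with [] => eq_refl | x :: l' => f_equal (cons x) (app_nil_rT l') end.

Lemma transport_castH {l1 l1' l2 l2'} (e1 : l1 = l1') (e2 : l2 = l2') (f : HomL l1 l2) :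
  transport e1 e2 f = castH (f_equal tens_list e2) ∘ f ∘ castH (f_equal tens_list (eq_sym e1)).
Proof. destruct e1, e2; simpl; now rewrite comp_idl, comp_idr. Qed.

Lemma transport_irrel {l1 l1' l2 l2'} (e1 e1' : l1 = l1') (e2 e2' : l2 = l2') (f : HomL l1 l2) :
  transport e1 e2 f = transport e1' e2' f.
Proof. now rewrite (proof_irrelevance _ e1 e1'), (proof_irrelevance _ e2 e2'). Qed.

Lemma transport_id {l1 l2} (e1 : l1 = l1) (e2 : l2 = l2) (f : HomL l1 l2) :
  transport e1 e2 f = f.
Proof. now rewrite (transport_irrel e1 eq_refl e2 eq_refl). Qed.

Lemma transport_transport {a a' a'' b b' b''} (e1 : a' = a'') (e2 : b' = b'')
    (e3 : a = a') (e4 : b = b') (f : HomL a b) :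
  transport e1 e2 (transport e3 e4 f) = transport (eq_trans e3 e1) (eq_trans e4 e2) f.
Proof. now destruct e1, e2, e3, e4. Qed.

Lemma tensL_transport_r {l1 l1' a a' b b'} (f : HomL l1 l1') (e1 : a = a') (e2 : b = b')
    (g : HomL a b) :
  tensL f (transport e1 e2 g)
  = transport (f_equal (app l1) e1) (f_equal (app l1') e2) (tensL f g).
Proof. now destruct e1, e2. Qed.

Lemma tensL_comp {a b c a' b' c'} (f : HomL b c) (f' : HomL a b) (g : HomL b' c')
    (g' : HomL a' b') :
  tensL (f ∘ f') (g ∘ g') = tensL f g ∘ tensL f' g'.
Proof. unfold tensL. rewrite tensm_comp. now ccast. Qed.

Lemma tensL_id (l1 l2 : list C) : tensL (idL l1) (idL l2) = idL (l1 ++ l2).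
Proof. unfold tensL, idL. rewrite tensm_id. now ccast. Qed.

Lemma idL_comp {a b} (f : HomL a b) : idL b ∘ f = f.
Proof. apply comp_idl. Qed.

Lemma comp_idL {a b} (f : HomL a b) : f ∘ idL a = f.
Proof. apply comp_idr. Qed.

Lemma tensL_compl {a b c s t} (f : HomL b c) (g : HomL a b) (h : HomL s t) :
  tensL (f ∘ g) h = tensL f (idL t) ∘ tensL g h.
Proof. now rewrite <- tensL_comp, comp_idl. Qed.

Lemma tensL_compr {a b c s t} (f : HomL b c) (g : HomL a b) (h : HomL s t) :
  tensL h (f ∘ g) = tensL (idL t) f ∘ tensL h g.
Proof. now rewrite <- tensL_comp, comp_idl. Qed.

Lemma tensL_split {l1 l1' l2 l2'} (f : HomL l1 l1') (g : HomL l2 l2') :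
  tensL f g = tensL f (idL l2') ∘ tensL (idL l1) g.
Proof. now rewrite <- tensL_comp, comp_idl, comp_idr. Qed.

Lemma tensL_assoc {a a' b b' c c'} (f : HomL a a') (g : HomL b b') (h : HomL c c') :
  tensL (tensL f g) h
  = transport (app_assocT a b c) (app_assocT a' b' c') (tensL f (tensL g h)).
Proof.
  rewrite transport_castH; unfold tensL.
  rewrite tensm_comp3l, tensm_comp3r, !tensm_castl, !tensm_castr.
  rassoc. rewrite (comp_assoc (castH _) ((f ⊠ g) ⊠ h)), tensmA_castH.
  ccast. castH_congr.
Qed.

Lemma tensL_idL_idL {a b s t} (f : HomL s t) :
  tensL (idL a) (tensL (idL b) f)
  = transport (eq_sym (app_assocT a b s)) (eq_sym (app_assocT a b t)) (tensL (idL (a ++ b)) f).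
Proof. rewrite <- tensL_id, tensL_assoc, transport_transport. symmetry; apply transport_id. Qed.

Lemma tensL_nil_l {l l'} (f : HomL l l') : tensL (idL []) f = f.
Proof. unfold tensL, idL; simpl tens_list. rewrite tensm1l_castH. now ccast. Qed.

Lemma tensL_nil_r {l l'} (f : HomL l l') :
  tensL f (idL []) = transport (eq_sym (app_nil_rT l)) (eq_sym (app_nil_rT l')) f.
Proof.
  rewrite transport_castH; unfold tensL, idL; simpl tens_list.
  rewrite tensm1r_castH. ccast. castH_congr.
Qed.

Lemma braidL_nat {l1 l1' l2 l2'} (f : HomL l1 l1') (g : HomL l2 l2') :
  braidL l1' l2' ∘ tensL f g = tensL g f ∘ braidL l1 l2.
Proof.
  unfold braidL, tensL. ccast.
  rewrite (comp_assoc (braid B _ _) (f ⊠ g)), braid_nat. now ccast.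
Qed.

Lemma braidL_hex1 (l1 l2 l3 : list C) :
  braidL (l1 ++ l2) l3 =
  transport (eq_sym (app_assocT l1 l3 l2)) (eq_sym (app_assocT l3 l1 l2))
    (tensL (braidL l1 l3) (idL l2))
  ∘ transport (app_assocT l1 l2 l3) eq_refl (tensL (idL l1) (braidL l2 l3)).
Proof.
  rewrite !transport_castH; unfold braidL, tensL, idL.
  rewrite (braid_castH B (eq_sym (tens_list_app l1 l2)) eq_refl), braid_hex1.
  rewrite tensm_comp3l, tensm_comp3r.
  ccast. castH_congr.
Qed.

Lemma braidL_hex2 (l1 l2 l3 : list C) :
  braidL l1 (l2 ++ l3) =
  transport eq_refl (app_assocT l2 l3 l1) (tensL (idL l2) (braidL l1 l3))
  ∘ transport (eq_sym (app_assocT l1 l2 l3)) (eq_sym (app_assocT l2 l1 l3))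
      (tensL (braidL l1 l2) (idL l3)).
Proof.
  rewrite !transport_castH; unfold braidL, tensL, idL.
  rewrite (braid_castH B eq_refl (eq_sym (tens_list_app l2 l3))), braid_hex2.
  rewrite tensm_comp3l, tensm_comp3r.
  ccast. castH_congr.
Qed.

Lemma braidL_nil_l (l : list C) : braidL [] l = transport eq_refl (eq_sym (app_nil_rT l)) (idL l).
Proof.
  rewrite transport_castH; unfold braidL, idL.
  destruct (braid_unit_l B (tens_list l)) as [e He]; simpl tens_list.
  rewrite He. ccast. castH_congr.
Qed.

Lemma braidL_nil_r (l : list C) : braidL l [] = transport (eq_sym (app_nil_rT l)) eq_refl (idL l).
Proof.
  rewrite transport_castH; unfold braidL, idL.
  destruct (braid_unit_r B (tens_list l)) as [e He]; simpl tens_list.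
  rewrite He. ccast. castH_congr.
Qed.

Definition app_assoc4 (l s m x : list C) : (l ++ (s ++ m)) ++ x = l ++ (s ++ (m ++ x)) :=
  eq_trans (eq_sym (app_assocT l (s ++ m) x)) (f_equal (app l) (eq_sym (app_assocT s m x))).

Lemma tensL_interchange (l m r : list C) {s s' t t'} (f : HomL s s') (g : HomL t t') :
  tensL (idL l) (tensL f (idL (m ++ (t' ++ r))))
  ∘ transport (app_assoc4 l s m (t ++ r)) (app_assoc4 l s m (t' ++ r))
      (tensL (idL (l ++ (s ++ m))) (tensL g (idL r)))
  = transport (app_assoc4 l s' m (t ++ r)) (app_assoc4 l s' m (t' ++ r))
      (tensL (idL (l ++ (s' ++ m))) (tensL g (idL r)))
    ∘ tensL (idL l) (tensL f (idL (m ++ (t ++ r)))).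
Proof.
  assert (Hflat : forall q (h : HomL t t'),
    transport (app_assoc4 l q m (t ++ r)) (app_assoc4 l q m (t' ++ r))
      (tensL (idL (l ++ (q ++ m))) (tensL h (idL r)))
    = tensL (idL l) (tensL (idL q) (tensL (idL m) (tensL h (idL r))))).
  { intros q h.
    rewrite (tensL_idL_idL (a := q) (b := m)), tensL_transport_r,
      (tensL_idL_idL (a := l) (b := q ++ m)), !transport_transport.
    apply transport_irrel. }
  rewrite !Hflat, <- !tensL_id, <- !tensL_comp. unfold idL. now rewrite !comp_idl, !comp_idr.
Qed.

End ListStrictification.

(* A morphism between lists is in layer normal form when it is a right-nested composite of
   layers [tensL (idL l) (tensL f (idL r))] with [f] atomic (a generator or a braiding);
   [to_layers] whiskers the goal by empty lists so that [layer_nf] can reach this form. *)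
Ltac reduce_transports := cbn [transport app_assocT app_nil_rT app_assoc4 app f_equal eq_trans eq_sym].
Ltac reduce_transports_in Hx :=
  cbn [transport app_assocT app_nil_rT app_assoc4 app f_equal eq_trans eq_sym] in Hx.
Ltac is_atom g := lazymatch g with
  | idL _ _ => fail | tensL _ _ => fail | comp _ _ => fail | _ => idtac end.
Ltac not_idL h := lazymatch h with idL _ _ => fail | _ => idtac end.
Ltac layer_nf_step := first [
    rewrite tensL_compl | rewrite tensL_compr
  | match goal with |- context [tensL (tensL ?f ?g) ?h] =>
      let E := fresh in pose proof (tensL_assoc f g h) as E; reduce_transports_in E;
      rewrite E; clear E; reduce_transports end
  | rewrite tensL_id
  | match goal with |- context [tensL (idL _ ?a) (tensL (idL _ ?b) ?x)] =>
      let E := fresh in pose proof (tensL_idL_idL (a:=a) (b:=b) x) as E; reduce_transports_in E;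
      rewrite E; clear E; reduce_transports end
  | rewrite idL_comp | rewrite comp_idL
  | match goal with |- context [tensL ?g ?h] =>
      is_atom g; not_idL h;
      let E := fresh in pose proof (tensL_split g h) as E; reduce_transports_in E;
      rewrite E; clear E end ].
Ltac layer_nf := reduce_transports; repeat (layer_nf_step; reduce_transports); rassoc;
  reduce_transports.
Ltac layer_nf_in Hx := revert Hx; layer_nf; intro Hx.

Ltac append_to_chain x k := lazymatch x with
  | ?a ∘ ?b => let r := append_to_chain b k in constr:(a ∘ r)
  | _ => constr:(x ∘ k) end.
(* From [Hx : L = R] build [forall k, L ∘ k = R ∘ k] with both sides right-nested, so that
   [Hx] can be used on any segment of a right-nested composite. *)
Ltac extend_chain_eq Hx Hk := lazymatch type of Hx with @eq ?T ?L ?R =>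
  let T' := eval unfold HomL in T in lazymatch T' with Hom ?D _ =>
  assert (Hk : forall W (k : Hom W D),
    ltac:(let l := append_to_chain L constr:(k) in let r := append_to_chain R constr:(k) in
          exact (l = r)));
  [intros W k; transitivity (L ∘ k); [rassoc; reflexivity | rewrite Hx; rassoc; reflexivity]
  | ] end end.
Ltac rewrite_layers E := let Hx := fresh "Hx" in let Hk := fresh "Hk" in
  pose proof E as Hx; layer_nf_in Hx; extend_chain_eq Hx Hk;
  first [rewrite Hk | rewrite Hx]; clear Hx Hk; layer_nf.
Ltac rewrite_at E l r :=
  rewrite_layers (f_equal (fun u => tensL (idL _ l) (tensL u (idL _ r))) E).
Ltac to_layers := match goal with |- ?a = ?b =>
  let Hw := fresh "Hw" in
  assert (Hw : tensL (idL _ []) (tensL a (idL _ [])) = tensL (idL _ []) (tensL b (idL _ [])));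
  [ | rewrite !tensL_nil_l, !tensL_nil_r in Hw; reduce_transports_in Hw; exact Hw ] end.

Ltac chain_nth x n := lazymatch n with
  | O => lazymatch x with ?a ∘ _ => a | _ => x end
  | S ?n' => lazymatch x with _ ∘ ?b => chain_nth b n' end end.
Ltac atom_source g := let T := type of g in let T := eval cbn [app] in T in
  lazymatch T with HomL _ ?s _ => s end.
Ltac atom_target g := let T := type of g in let T := eval cbn [app] in T in
  lazymatch T with HomL _ _ ?s' => s' end.
Ltac interchange_layers P Q :=
  lazymatch P with tensL (idL _ ?l1) (tensL ?f (idL _ ?r1)) =>
  lazymatch Q with tensL (idL _ ?l2) (tensL ?g (idL _ ?r2)) =>
  let s := atom_source f in let t' := atom_target g in
  let f_left_of_g := eval cbv in (Nat.leb (length l1 + length s) (length l2)) in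
  let g_left_of_f := eval cbv in (Nat.leb (length l2 + length t') (length l1)) in
  lazymatch f_left_of_g with
  | true => let n := eval cbv in (length l1 + length s) in
            let m := eval cbv [skipn] in (skipn n l2) in
            rewrite_layers (tensL_interchange l1 m r2 f g)
  | false => lazymatch g_left_of_f with
     | true => let n := eval cbv in (length l2 + length t') in
               let m := eval cbv [skipn] in (skipn n l1) in
               rewrite_layers (eq_sym (tensL_interchange l2 m r1 g f))
     | false => fail "layers do not commute"
     end end end end.
(* [interchange n] swaps layers [n] and [n+1] of the left-hand side (counting from 0, outermost
   first); [interchangeR n] does the same on the right-hand side. *)
Ltac interchange n := lazymatch goal with |- ?L = _ =>
  let P := chain_nth L n in let Q := chain_nth L (S n) in interchange_layers P Q end.
Ltac interchangeR n := lazymatch goal with |- _ = ?R =>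
  let P := chain_nth R n in let Q := chain_nth R (S n) in interchange_layers P Q end.

Section BraidedGroupL.
Context {C : Category} (B : Braided C) (H : BraidedGroup B).
Local Notation "f ⊗ g" := (@tensL _ B _ _ _ _ f g) (at level 34, right associativity).
Local Notation A := (bgA H).
Local Notation I := (idL B).
Local Notation Ψ := (braidL B).

Definition mu : HomL B [A; A] [A] := bg_mu H.
Definition eta : HomL B [] [A] := bg_eta H.
Definition Delta : HomL B [A] [A; A] := bg_Delta H.
Definition eps : HomL B [A] [] := bg_eps H.
Definition anti : HomL B [A] [A] := bg_S H.

Ltac unfold_to_C := unfold mu, eta, Delta, eps, anti, tensL, braidL, idL;
  rewrite ?transport_castH; simpl tens_list; tensm_split; ccast.
Ltac prepare_axiom Hx := unfold mid, assocm, assocmI, lu, ru, luI, ruI in Hx;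
  revert Hx; tensm_split; ccast; intro Hx.
Ltac by_axiom Hx := match type of Hx with ?L = ?R =>
  transitivity L; [castH_congr | transitivity R; [exact Hx | castH_congr]] end.

Lemma mu_assoc : mu ∘ (mu ⊗ I [A]) = mu ∘ (I [A] ⊗ mu).
Proof.
  pose proof (bg_mu_assoc H) as Hx. prepare_axiom Hx. unfold_to_C.
  rewrite comp_assoc, Hx. now ccast.
Qed.

Lemma mu_unitl : mu ∘ (eta ⊗ I [A]) = I [A].
Proof.
  pose proof (bg_mu_unitl H) as Hx. prepare_axiom Hx. unfold_to_C.
  rewrite comp_assoc, Hx. now ccast.
Qed.

Lemma mu_unitr : mu ∘ (I [A] ⊗ eta) = I [A].
Proof.
  pose proof (bg_mu_unitr H) as Hx. prepare_axiom Hx. unfold_to_C.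
  rewrite comp_assoc, Hx. now ccast.
Qed.

Lemma Delta_coassoc : (Delta ⊗ I [A]) ∘ Delta = (I [A] ⊗ Delta) ∘ Delta.
Proof.
  pose proof (bg_coassoc H) as Hx. prepare_axiom Hx. unfold_to_C.
  rewrite <- Hx. castH_congr.
Qed.

Lemma Delta_counitl : (eps ⊗ I [A]) ∘ Delta = I [A].
Proof.
  pose proof (bg_counitl H) as Hx. prepare_axiom Hx. unfold_to_C.
  etransitivity; [|exact Hx]. castH_congr.
Qed.

Lemma Delta_counitr : (I [A] ⊗ eps) ∘ Delta = I [A].
Proof.
  pose proof (bg_counitr H) as Hx. prepare_axiom Hx. unfold_to_C.
  etransitivity; [|exact Hx]. castH_congr.
Qed.

Lemma Delta_mu : Delta ∘ mu = (mu ⊗ mu) ∘ (I [A] ⊗ Ψ [A] [A] ⊗ I [A]) ∘ (Delta ⊗ Delta).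
Proof.
  pose proof (bg_bialg H) as Hx. prepare_axiom Hx. unfold_to_C.
  rewrite Hx. castH_congr.
Qed.

Lemma Delta_eta : Delta ∘ eta = eta ⊗ eta.
Proof. pose proof (bg_Delta_eta H) as Hx. prepare_axiom Hx. unfold_to_C. by_axiom Hx. Qed.

Lemma eps_mu : eps ∘ mu = eps ⊗ eps.
Proof. pose proof (bg_eps_mu H) as Hx. prepare_axiom Hx. unfold_to_C. by_axiom Hx. Qed.

Lemma antipode_l : mu ∘ (anti ⊗ I [A]) ∘ Delta = eta ∘ eps.
Proof. pose proof (bg_antipode_l H) as Hx. prepare_axiom Hx. unfold_to_C. exact Hx. Qed.

Lemma antipode_r : mu ∘ (I [A] ⊗ anti) ∘ Delta = eta ∘ eps.
Proof. pose proof (bg_antipode_r H) as Hx. prepare_axiom Hx. unfold_to_C. exact Hx. Qed.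

Section CrossedModuleL.
Variable X : RCrossedModule H.
Local Notation Xo := (cmX X).

Definition act : HomL B [Xo; A] [Xo] := cm_act X.
Definition coact : HomL B [Xo] [Xo; A] := cm_coact X.

Lemma act_assoc : act ∘ (act ⊗ I [A]) = act ∘ (I [Xo] ⊗ mu).
Proof.
  pose proof (cm_act_assoc X) as Hx. prepare_axiom Hx. unfold act; unfold_to_C.
  rewrite comp_assoc, Hx. now ccast.
Qed.

Lemma act_unit : act ∘ (I [Xo] ⊗ eta) = I [Xo].
Proof.
  pose proof (cm_act_unit X) as Hx. prepare_axiom Hx. unfold act; unfold_to_C.
  rewrite comp_assoc, Hx. now ccast.
Qed.

Lemma coact_coassoc : (coact ⊗ I [A]) ∘ coact = (I [Xo] ⊗ Delta) ∘ coact.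
Proof.
  pose proof (cm_coact_coassoc X) as Hx. prepare_axiom Hx. unfold coact; unfold_to_C.
  rewrite Hx. now ccast.
Qed.

Lemma yetter_drinfeld :
  (I [Xo] ⊗ mu) ∘ (Ψ [A] [Xo] ⊗ I [A]) ∘ (I [A] ⊗ (coact ∘ act)) ∘ (Ψ [Xo] [A] ⊗ I [A])
  ∘ (I [Xo] ⊗ Delta)
  = (act ⊗ mu) ∘ (I [Xo] ⊗ Ψ [A] [A] ⊗ I [A]) ∘ (coact ⊗ Delta).
Proof.
  pose proof (cm_YD X) as Hx. prepare_axiom Hx. unfold act, coact; unfold_to_C. by_axiom Hx.
Qed.
End CrossedModuleL.

Lemma braid_eta_l : Ψ [A] [A] ∘ (eta ⊗ I [A]) = I [A] ⊗ eta.
Proof. rewrite braidL_nat, braidL_nil_l. reduce_transports. apply comp_idL. Qed.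

Lemma braid_eta_r : Ψ [A] [A] ∘ (I [A] ⊗ eta) = eta ⊗ I [A].
Proof. rewrite braidL_nat, braidL_nil_r. reduce_transports. apply comp_idL. Qed.

Lemma braid_eps_l : (I [A] ⊗ eps) ∘ Ψ [A] [A] = eps ⊗ I [A].
Proof. rewrite <- braidL_nat, braidL_nil_l. reduce_transports. apply idL_comp. Qed.

Lemma braid_eps_r : (eps ⊗ I [A]) ∘ Ψ [A] [A] = I [A] ⊗ eps.
Proof. rewrite <- braidL_nat, braidL_nil_r. reduce_transports. apply idL_comp. Qed.

Definition mu2 : HomL B [A; A; A; A] [A; A] := (mu ⊗ mu) ∘ (I [A] ⊗ Ψ [A] [A] ⊗ I [A]).

Lemma mu2_unitl : mu2 ∘ ((eta ⊗ eta) ⊗ I [A; A]) = I [A; A].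
Proof.
  unfold mu2. to_layers. layer_nf.
  rewrite_layers (tensL_interchange [] [] [A; A] eta eta).
  rewrite_at braid_eta_l [A] [A].
  rewrite_at mu_unitl [A; A] ([] : list C). rewrite_at mu_unitl ([] : list C) [A].
  reflexivity.
Qed.

Lemma mu2_unitr : mu2 ∘ (I [A; A] ⊗ (eta ⊗ eta)) = I [A; A].
Proof.
  unfold mu2. to_layers. layer_nf.
  rewrite_at braid_eta_r [A] [A]. rewrite_layers (tensL_interchange [A] [A] [] eta eta).
  rewrite_at mu_unitr [A; A] ([] : list C). rewrite_at mu_unitr ([] : list C) [A].
  reflexivity.
Qed.

Lemma mu2_assoc : mu2 ∘ (mu2 ⊗ I [A; A]) = mu2 ∘ (I [A; A] ⊗ mu2).
Proof.
  unfold mu2. to_layers. layer_nf.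
  interchange 3.
  rewrite_at (braidL_nat mu (I [A])) [A] [A]. rewrite_at (braidL_hex1 B [A] [A] [A]) [A] [A].
  interchange 4. interchange 3. interchange 2. interchange 1.
  rewrite_at mu_assoc ([] : list C) [A]. rewrite_at mu_assoc [A; A; A] ([] : list C).
  rewrite_at (braidL_nat (I [A]) mu) [A] [A]. rewrite_at (braidL_hex2 B [A] [A] [A]) [A] [A].
  interchangeR 1. interchangeR 4. interchangeR 3. interchangeR 5.
  reflexivity.
Qed.

Lemma Delta_mu2 : Delta ∘ mu = mu2 ∘ (Delta ⊗ Delta).
Proof. rewrite Delta_mu. unfold mu2. now rassoc. Qed.

Definition anti_Delta_op : HomL B [A] [A; A] := (anti ⊗ anti) ∘ Ψ [A] [A] ∘ Delta.

Lemma Delta_anti_Delta_op : mu2 ∘ (Delta ⊗ anti_Delta_op) ∘ Delta = (eta ⊗ eta) ∘ eps.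
Proof.
  unfold mu2, anti_Delta_op. to_layers. layer_nf.
  rewrite_at (eq_sym (braidL_nat anti anti)) [A; A] ([] : list C).
  rewrite_at (eq_sym (braidL_hex1 B [A] [A] [A])) [A] ([] : list C).
  rewrite_at (eq_sym Delta_coassoc) ([] : list C) ([] : list C).
  rewrite_at Delta_coassoc ([] : list C) [A].
  rewrite_at (braidL_nat (I [A] ⊗ anti) (I [A])) [A] ([] : list C).
  rewrite_at (braidL_nat (I [A; A]) anti) [A] ([] : list C).
  rewrite_at (braidL_nat Delta (I [A])) [A] ([] : list C).
  interchange 2. interchange 1. rewrite_at antipode_r [A; A] ([] : list C).
  rewrite_at braid_eps_l [A] ([] : list C). rewrite_at Delta_counitr ([] : list C) [A].
  interchange 1. interchange 0. rewrite_at antipode_r ([] : list C) ([] : list C).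
  interchangeR 0. reflexivity.
Qed.

(* [Delta ∘ anti] and [anti_Delta_op] are both convolution inverses of [Delta] in
   Hom(A, A ⊗ A), the convolution product being taken with respect to [mu2]. *)
Lemma Delta_anti : Delta ∘ anti = anti_Delta_op.
Proof.
  transitivity (mu2 ∘ (mu2 ⊗ I [A; A]) ∘ ((Delta ∘ anti) ⊗ Delta ⊗ anti_Delta_op)
                ∘ (Delta ⊗ I [A]) ∘ Delta).
  - symmetry. to_layers. layer_nf.
    rewrite_at Delta_coassoc ([] : list C) ([] : list C).
    rewrite_at mu2_assoc ([] : list C) ([] : list C).
    interchange 3. interchange 4. interchange 5. interchange 2. interchange 3. interchange 4.
    rewrite_at Delta_anti_Delta_op [A; A] ([] : list C).
    rewrite_at mu2_unitr ([] : list C) ([] : list C).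
    interchange 0. interchange 1. rewrite_at Delta_counitr ([] : list C) ([] : list C).
    reflexivity.
  - to_layers. layer_nf.
    interchange 3. rewrite_at (eq_sym Delta_mu2) ([] : list C) [A; A].
    interchange 4. rewrite_at antipode_l ([] : list C) [A; A].
    rewrite_at Delta_eta ([] : list C) [A; A].
    rewrite_at mu2_unitl ([] : list C) ([] : list C).
    interchange 0. rewrite_at Delta_counitl ([] : list C) ([] : list C).
    reflexivity.
Qed.

Definition Delta2 : HomL B [A; A] [A; A; A; A] := (I [A] ⊗ Ψ [A] [A] ⊗ I [A]) ∘ (Delta ⊗ Delta).

Lemma Delta2_counitl : ((eps ⊗ eps) ⊗ I [A; A]) ∘ Delta2 = I [A; A].
Proof.
  unfold Delta2. to_layers. layer_nf.
  rewrite_at braid_eps_r [A] [A]. interchange 1.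
  rewrite_at Delta_counitl [A] ([] : list C). rewrite_at Delta_counitl ([] : list C) [A].
  reflexivity.
Qed.

Lemma Delta2_counitr : (I [A; A] ⊗ (eps ⊗ eps)) ∘ Delta2 = I [A; A].
Proof.
  unfold Delta2. to_layers. layer_nf.
  interchange 0. rewrite_at braid_eps_l [A] [A]. interchange 2. interchange 1.
  rewrite_at Delta_counitr ([] : list C) [A]. rewrite_at Delta_counitr [A] ([] : list C).
  reflexivity.
Qed.

Lemma Delta2_coassoc : (Delta2 ⊗ I [A; A]) ∘ Delta2 = (I [A; A] ⊗ Delta2) ∘ Delta2.
Proof.
  unfold Delta2. to_layers. layer_nf.
  rewrite_at (eq_sym (braidL_nat (I [A]) Delta)) [A] [A].
  rewrite_at (braidL_hex2 B [A] [A] [A]) [A] [A].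
  interchangeR 1. rewrite_at (eq_sym (braidL_nat Delta (I [A]))) [A] [A].
  rewrite_at (braidL_hex1 B [A] [A] [A]) [A] [A].
  interchange 1. interchange 2. interchange 3. rewrite_at Delta_coassoc ([] : list C) [A; A].
  interchange 3. interchange 4. rewrite_at Delta_coassoc [A] ([] : list C).
  interchangeR 1. interchangeR 2. interchangeR 3. interchangeR 4. interchangeR 0.
  reflexivity.
Qed.

Lemma Delta2_Delta_mu : Delta ∘ mu = (mu ⊗ mu) ∘ Delta2.
Proof. rewrite Delta_mu. unfold Delta2. now rassoc. Qed.

Definition mu_op_anti : HomL B [A; A] [A] := mu ∘ Ψ [A] [A] ∘ (anti ⊗ anti).

Lemma mu_mu_op_anti : mu ∘ (mu ⊗ mu_op_anti) ∘ Delta2 = eta ∘ (eps ⊗ eps).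
Proof.
  unfold Delta2, mu_op_anti. to_layers. layer_nf.
  interchange 3. interchange 4. rewrite_at (braidL_nat anti anti) [A] ([] : list C).
  interchange 4. interchange 3. interchange 2.
  rewrite_at (eq_sym mu_assoc) ([] : list C) ([] : list C).
  rewrite_at mu_assoc ([] : list C) [A].
  rewrite_at (eq_sym (braidL_hex2 B [A] [A] [A])) [A] ([] : list C).
  interchange 6. rewrite_at (braidL_nat (I [A]) Delta) [A] ([] : list C).
  interchange 3. interchange 2. rewrite_at antipode_r [A] [A].
  rewrite_at braid_eps_r [A] ([] : list C). interchange 4. interchange 2.
  rewrite_at mu_unitr ([] : list C) [A].
  rewrite_at antipode_r ([] : list C) ([] : list C).
  reflexivity.
Qed.

(* Dually, [anti ∘ mu] and [mu_op_anti] are both convolution inverses of [mu] in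
   Hom(A ⊗ A, A) for the coproduct [Delta2]. *)
Lemma anti_mu : anti ∘ mu = mu_op_anti.
Proof.
  transitivity (mu ∘ (mu ⊗ I [A]) ∘ ((anti ∘ mu) ⊗ mu ⊗ mu_op_anti)
                ∘ (Delta2 ⊗ I [A; A]) ∘ Delta2).
  - symmetry. to_layers. layer_nf.
    rewrite_at mu_assoc ([] : list C) ([] : list C).
    rewrite_at Delta2_coassoc ([] : list C) ([] : list C).
    interchange 1. interchange 2. rewrite_at mu_mu_op_anti [A; A] ([] : list C).
    interchange 2. interchange 1. rewrite_at mu_unitr ([] : list C) ([] : list C).
    rewrite_at Delta2_counitr ([] : list C) ([] : list C).
    reflexivity.
  - to_layers. layer_nf.
    interchange 4. interchange 3. rewrite_at (eq_sym Delta2_Delta_mu) ([] : list C) [A; A].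
    interchange 3. rewrite_at antipode_l ([] : list C) [A].
    rewrite_at mu_unitl ([] : list C) ([] : list C).
    interchange 0. rewrite_at eps_mu ([] : list C) [A; A].
    rewrite_at Delta2_counitl ([] : list C) ([] : list C).
    reflexivity.
Qed.

Definition sigmaL {l} (a : HomL B (l ++ [A]) l) (c : HomL B l (l ++ [A])) : HomL B l l :=
  a ∘ (I l ⊗ anti) ∘ c.
Arguments sigmaL : clear implicits.

Definition ydbraidL (X Y : RCrossedModule H) : HomL B [cmX X; cmX Y] [cmX Y; cmX X] :=
  (I [cmX Y] ⊗ act X) ∘ (Ψ [cmX X] [cmX Y] ⊗ I [A]) ∘ (I [cmX X] ⊗ coact Y).

Definition tens_actL (Y X : RCrossedModule H) : HomL B [cmX Y; cmX X; A] [cmX Y; cmX X] :=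
  (act Y ⊗ act X) ∘ (I [cmX Y] ⊗ Ψ [cmX X] [A] ⊗ I [A]) ∘ (I [cmX Y; cmX X] ⊗ Delta).

Definition tens_coactL (Y X : RCrossedModule H) : HomL B [cmX Y; cmX X] [cmX Y; cmX X; A] :=
  (I [cmX Y; cmX X] ⊗ mu) ∘ (I [cmX Y] ⊗ Ψ [A] [cmX X] ⊗ I [A]) ∘ (coact Y ⊗ coact X).

Ltac unfold_crossed_module_defs := unfold ydbraid, sigma, tens_act, tens_coact, mid, assocm, assocmI;
  unfold ydbraidL, sigmaL, tens_actL, tens_coactL, act, coact, mu, eta,
    Delta, eps, anti, tensL, braidL, idL;
  simpl tens_list; tensm_split; ccast.

Lemma ydbraid_ydbraidL (X Y : RCrossedModule H) : ydbraid X Y = ydbraidL X Y.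
Proof. unfold_crossed_module_defs. castH_congr. Qed.

Lemma sigma_sigmaL (X : RCrossedModule H) :
  sigma (cm_act X) (cm_coact X) = sigmaL [cmX X] (act X) (coact X).
Proof. unfold_crossed_module_defs. castH_congr. Qed.

Lemma sigma_tens_sigmaL (Y X : RCrossedModule H) :
  sigma (tens_act Y X) (tens_coact Y X) = sigmaL [cmX Y; cmX X] (tens_actL Y X) (tens_coactL Y X).
Proof. unfold_crossed_module_defs. castH_congr. Qed.

Lemma tensm_tensL {X X' Y Y' : C} (f : Hom X X') (g : Hom Y Y') :
  tensm B f g = @tensL _ B [X] [X'] [Y] [Y'] f g.
Proof. unfold tensL; simpl tens_list. now ccast. Qed.

Lemma braid_braidL (X Y : C) : braid B X Y = Ψ [X] [Y].
Proof. unfold braidL; simpl tens_list. now ccast. Qed.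

Section CrossedModulePair.
Variables X Y : RCrossedModule H.
Local Notation Xo := (cmX X).
Local Notation Yo := (cmX Y).

Lemma tens_act_assoc :
  tens_actL Y X ∘ (tens_actL Y X ⊗ I [A]) = tens_actL Y X ∘ (I [Yo; Xo] ⊗ mu).
Proof.
  unfold tens_actL. to_layers. layer_nf.
  rewrite_at Delta_mu [Yo; Xo] ([] : list C).
  rewrite_at (braidL_nat (I [Xo]) mu) [Yo] [A].
  rewrite_at (braidL_hex2 B [Xo] [A] [A]) [Yo] [A].
  interchange 3. interchange 2. interchange 4.
  rewrite_at (braidL_nat (act X) (I [A])) [Yo; A] [A].
  rewrite_at (braidL_hex1 B [Xo] [A] [A]) [Yo; A] [A].
  interchange 1. rewrite_at (act_assoc X) [Yo; A; A] ([] : list C).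
  rewrite_at (act_assoc Y) ([] : list C) [Xo].
  interchangeR 7. interchangeR 4. interchangeR 5. interchangeR 6. interchangeR 3.
  interchangeR 1.
  reflexivity.
Qed.

Lemma yetter_drinfeld_sigma :
  (I [Xo] ⊗ mu) ∘ (Ψ [A] [Xo] ⊗ I [A]) ∘ (I [A] ⊗ (coact X ∘ act X)) ∘ (Ψ [Xo] [A] ⊗ I [A])
  ∘ (I [Xo] ⊗ Delta) ∘ (I [Xo] ⊗ anti) ∘ coact X
  = sigmaL [cmX X] (act X) (coact X) ⊗ eta.
Proof.
  to_layers. layer_nf. rewrite_at (yetter_drinfeld X) ([] : list C) ([] : list C).
  rewrite_at Delta_anti [Xo] ([] : list C). unfold anti_Delta_op. layer_nf.
  interchange 3. interchange 4. interchange 5. interchange 6.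
  rewrite_at (coact_coassoc X) ([] : list C) ([] : list C).
  rewrite_at (eq_sym Delta_coassoc) [Xo] ([] : list C).
  rewrite_at (eq_sym (braidL_nat anti anti)) [Xo; A] ([] : list C).
  rewrite_at (eq_sym (braidL_hex1 B [A] [A] [A])) [Xo] ([] : list C).
  rewrite_at (braidL_nat (I [A] ⊗ anti) (I [A])) [Xo] ([] : list C).
  rewrite_at (braidL_nat (I [A; A]) anti) [Xo] ([] : list C).
  rewrite_at (braidL_nat Delta (I [A])) [Xo] ([] : list C).
  interchange 2. interchange 1. rewrite_at antipode_r [Xo; A] ([] : list C).
  rewrite_at braid_eps_l [Xo] ([] : list C). rewrite_at Delta_counitl [Xo] ([] : list C).
  unfold sigmaL. layer_nf. interchange 2.
  reflexivity.
Qed.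

Lemma tens_coact_ydbraid :
  tens_coactL Y X ∘ ydbraidL X Y
  = (I [Yo] ⊗ ((act X ⊗ mu) ∘ (I [Xo] ⊗ Ψ [A] [A] ⊗ I [A]) ∘ (coact X ⊗ Delta)))
    ∘ (Ψ [Xo] [Yo] ⊗ I [A]) ∘ (I [Xo] ⊗ coact Y).
Proof.
  unfold tens_coactL, ydbraidL. to_layers. layer_nf.
  interchange 2. interchange 3.
  rewrite_at (eq_sym (braidL_nat (I [Xo]) (coact Y))) ([] : list C) [A].
  rewrite_at (coact_coassoc Y) [Xo] ([] : list C).
  rewrite_at (braidL_hex2 B [Xo] [Yo] [A]) ([] : list C) [A].
  interchange 5. rewrite_at (yetter_drinfeld X) [Yo] ([] : list C).
  reflexivity.
Qed.

Lemma ydbraid_sigma_ydbraid :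
  ydbraidL Y X ∘ sigmaL [Yo; Xo] (tens_actL Y X) (tens_coactL Y X) ∘ ydbraidL X Y
  = Ψ [Yo] [Xo] ∘ (sigmaL [Yo] (act Y) (coact Y) ⊗ sigmaL [Xo] (act X) (coact X))
    ∘ Ψ [Xo] [Yo].
Proof.
  assert (sigma_Y_def : act Y ∘ (I [Yo] ⊗ anti) ∘ coact Y = sigmaL [Yo] (act Y) (coact Y))
    by reflexivity.
  unfold sigmaL at 1. cbn [app]. rassoc. rewrite tens_coact_ydbraid.
  unfold ydbraidL. to_layers. layer_nf.
  (* S(y₁ x₁) = S(x₁) S(y₁), and the product acts as the two factors in turn *)
  interchange 4. rewrite_at anti_mu [Yo; Xo; A] ([] : list C).
  unfold mu_op_anti. layer_nf.
  interchange 4. rewrite_at (eq_sym tens_act_assoc) ([] : list C) ([] : list C).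
  unfold tens_actL. layer_nf.
  rewrite_at (braidL_nat anti anti) [Yo; Xo; A] ([] : list C).
  rewrite_at (eq_sym (braidL_hex2 B [A] [A] [A])) [Yo; Xo] ([] : list C).
  interchange 15. rewrite_at (braidL_nat (I [A]) Delta) [Yo; Xo] ([] : list C).
  (* Δ ∘ S = (S ⊗ S) ∘ Ψ ∘ Δ, after which an antipode cancels on the X-factor *)
  interchange 11. rewrite_at Delta_anti [Yo; Xo] [A]. unfold anti_Delta_op. layer_nf.
  interchange 13. interchange 14. rewrite_at (eq_sym Delta_coassoc) [Yo; Xo] [A].
  rewrite_at (eq_sym (braidL_nat anti anti)) [Yo; Xo] [A].
  rewrite_at (eq_sym (braidL_hex1 B [Xo] [A] [A])) [Yo] [A].
  rewrite_at (eq_sym (braidL_nat (act X) (I [A]))) [Yo] [A].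
  interchange 10. interchange 11. interchange 10. rewrite_at (act_assoc X) [Yo] [A; A].
  interchange 11. interchange 12. interchange 13. interchange 11. interchange 10.
  rewrite_at antipode_r [Yo; Xo] [A; A].
  interchange 10. rewrite_at (act_unit X) [Yo] [A; A].
  interchange 10. rewrite_at Delta_counitl [Yo; Xo] [A].
  interchange 2. rewrite_at (braidL_nat (act Y) (I [Xo])) ([] : list C) [A].
  rewrite_at (act_assoc Y) [Xo] ([] : list C).
  rewrite_at (braidL_hex1 B [Yo] [A] [Xo]) ([] : list C) [A].
  interchange 1.
  interchange 10. rewrite_at (eq_sym (braidL_nat anti anti)) [Yo; Xo] ([] : list C).
  rewrite_at (eq_sym (braidL_hex1 B [Xo] [A] [A])) [Yo] ([] : list C).
  rewrite_at (braidL_nat (I [Xo] ⊗ anti) anti) [Yo] ([] : list C).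
  rewrite_at (braidL_nat (coact X) (I [A])) [Yo] ([] : list C).
  rewrite_at (eq_sym (braidL_hex2 B [Xo] [Yo] [A])) ([] : list C) ([] : list C).
  rewrite_at (braidL_nat (I [Xo]) (coact Y)) ([] : list C) ([] : list C).
  interchange 9. interchange 10. interchange 8. interchange 9.
  rewrite_at yetter_drinfeld_sigma [Yo] ([] : list C).
  interchange 2. interchange 1. rewrite_at (act_unit Y) [Xo] ([] : list C).
  rewrite_at sigma_Y_def ([] : list C) [Xo].
  interchange 1. reflexivity.
Qed.


End CrossedModulePair.
End BraidedGroupL.

Theorem mainTheorem9 (C : Category) (B : Braided C) (H : BraidedGroup B)
    (X Y : RCrossedModule H) :
  ydbraid Y X ∘ sigma (tens_act Y X) (tens_coact Y X) ∘ ydbraid X Y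
  = braid B (cmX Y) (cmX X)
    ∘ tensm B (sigma (cm_act Y) (cm_coact Y)) (sigma (cm_act X) (cm_coact X))
    ∘ braid B (cmX X) (cmX Y).
Proof.
  rewrite (ydbraid_ydbraidL X Y), (ydbraid_ydbraidL Y X), sigma_tens_sigmaL, !sigma_sigmaL,
    tensm_tensL, !braid_braidL.
  apply ydbraid_sigma_ydbraid.
Qed.
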